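(* Let $X$ be a vector lattice and let $l : X \to \mathbb{R}$ be a linear functional. Then $l$ is the sum of some pair of Riesz homomorphisms $X \to \mathbb{R}$ if and only if $l$ is positive and its kernel $\ker(l)$ is a Grothendieck subspace of $X$.
   Context: A Riesz homomorphism $X\to\mathbb{R}$ is a linear functional preserving finite lattice operations. A linear subspace $H$ of a vector lattice is called a Grothendieck subspace (or $G$-space) if for all $x, y \in H$ one has $x \vee y \vee 0 + x \wedge y \wedge 0 \in H$. *)

From HB Require Import structures.
From mathcomp Require Import all_boot all_order all_algebra.
From mathcomp Require Import reals.
Set Implicit Arguments. Unset Strict Implicit. Unset Printing Implicit Defensive.
Import Order.TTheory GRing.Theory Num.Theory.
Local Open Scope ring_scope.

Section VL.
Variables (R : realType) (X : lmodType R).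
Variables (le : X -> X -> Prop) (join meet : X -> X -> X).

Record is_vector_lattice : Prop := {
  vl_refl : forall x, le x x;
  vl_antisym : forall x y, le x y -> le y x -> x = y;
  vl_trans : forall x y z, le x y -> le y z -> le x z;
  vl_add : forall x y z, le x y -> le (x + z) (y + z);
  vl_scale : forall (a : R) x y, 0 <= a -> le x y -> le (a *: x) (a *: y);
  vl_join_l : forall x y, le x (join x y);
  vl_join_r : forall x y, le y (join x y);
  vl_join_lub : forall x y z, le x z -> le y z -> le (join x y) z;
  vl_meet_l : forall x y, le (meet x y) x;
  vl_meet_r : forall x y, le (meet x y) y;
  vl_meet_glb : forall x y z, le z x -> le z y -> le z (meet x y)
}.

Definition linear_functional (f : X -> R) : Prop :=
  forall (a : R) x y, f (a *: x + y) = a * f x + f y.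

Definition riesz_hom (f : X -> R) : Prop :=
  [/\ linear_functional f,
      forall x y, f (join x y) = Num.max (f x) (f y) &
      forall x y, f (meet x y) = Num.min (f x) (f y)].

Definition positive_functional (f : X -> R) : Prop :=
  forall x, le 0 x -> 0 <= f x.

Definition linear_subspace (H : X -> Prop) : Prop :=
  H 0 /\ forall (a : R) x y, H x -> H y -> H (a *: x + y).

Definition grothendieck_subspace (H : X -> Prop) : Prop :=
  linear_subspace H /\
  forall x y, H x -> H y -> H (join (join x y) 0 + meet (meet x y) 0).

Definition kernel (f : X -> R) : X -> Prop := fun x => f x = 0.

End VL.

(* A sum f + g of Riesz homomorphisms is positive, and on its kernel g = -f, so
   f and g take opposite values at x \/ y \/ 0 + x /\ y /\ 0.
   Conversely, let l be positive with a G-space kernel. Applied to x - P and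
   x - Q, where P, Q are disjoint with l P = l Q = l x, the G-space axiom gives
   l (x /\ (P + Q)) = l x; hence no three pairwise disjoint positive elements
   all have positive value. If no two do, l preserves x+ and is itself a Riesz
   homomorphism. Otherwise fix disjoint a, b >= 0 with l a = l b = 1. Then
   x |-> l (x /\ l(x) a) is additive and positively homogeneous on the positive
   cone, so it extends to a linear functional; this is a Riesz homomorphism,
   since two disjoint elements on which it is nonzero would form a forbidden
   triple with b, and it sums with its counterpart for b to l. *)

Set Warnings "-notation-overridden,-ambiguous-paths".
From HB Require Import structures.
From mathcomp Require Import all_boot all_order all_algebra.
From mathcomp Require Import reals.
From mathcomp Require Import ring lra.
From Stdlib Require Import Classical_Prop.
Set Implicit Arguments. Unset Strict Implicit. Unset Printing Implicit Defensive.
Import Order.TTheory GRing.Theory Num.Theory.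
Local Open Scope ring_scope.

Section LinearFunctional.
Variables (R : realType) (X : lmodType R) (f : X -> R).
Hypothesis hf : linear_functional f.

Lemma lfunD x y : f (x + y) = f x + f y.
Proof. by rewrite -{1}[x]scale1r hf mul1r. Qed.

Lemma lfun0 : f 0 = 0.
Proof. by have := hf (-1) 0 0; rewrite scaler0 addr0 mulN1r addNr. Qed.

Lemma lfunZ c x : f (c *: x) = c * f x.
Proof. by rewrite -[c *: x]addr0 hf lfun0 addr0. Qed.

Lemma lfunB x y : f (x - y) = f x - f y.
Proof. by rewrite lfunD -scaleN1r lfunZ mulN1r. Qed.

Lemma kernel_subspace : linear_subspace (kernel f).
Proof. by split=> [|a x y]; rewrite /kernel ?lfun0 // hf => -> ->; rewrite mulr0 addr0. Qed.

End LinearFunctional.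

Section VectorLattice.
Variables (R : realType) (X : lmodType R).
Variables (le : X -> X -> Prop) (join meet : X -> X -> X).
Hypothesis hX : is_vector_lattice le join meet.

Lemma vlexx x : le x x. Proof. exact: (vl_refl hX x). Qed.
Lemma vle_anti x y : le x y -> le y x -> x = y. Proof. exact: (vl_antisym hX). Qed.
Lemma vle_trans x y z : le x y -> le y z -> le x z. Proof. exact: (vl_trans hX). Qed.
Lemma vleD2r z x y : le x y -> le (x + z) (y + z). Proof. exact: (vl_add hX z). Qed.
Lemma vleZ2l c x y : 0 <= c -> le x y -> le (c *: x) (c *: y). Proof. exact: (vl_scale hX). Qed.
Lemma vle_joinl x y : le x (join x y). Proof. exact: (vl_join_l hX x y). Qed.
Lemma vle_joinr x y : le y (join x y). Proof. exact: (vl_join_r hX x y). Qed.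
Lemma vjoin_lub x y z : le x z -> le y z -> le (join x y) z. Proof. exact: (vl_join_lub hX). Qed.
Lemma vle_meetl x y : le (meet x y) x. Proof. exact: (vl_meet_l hX x y). Qed.
Lemma vle_meetr x y : le (meet x y) y. Proof. exact: (vl_meet_r hX x y). Qed.
Lemma vmeet_glb x y z : le z x -> le z y -> le z (meet x y). Proof. exact: (vl_meet_glb hX). Qed.

Lemma vleD2l z x y : le x y -> le (z + x) (z + y).
Proof. by rewrite ![z + _]addrC; apply: vleD2r. Qed.

Lemma vleD x y x' y' : le x y -> le x' y' -> le (x + x') (y + y').
Proof. by move=> h h'; apply: vle_trans (vleD2r _ h) (vleD2l _ h'). Qed.

Lemma vsubr_ge0 x y : le 0 (y - x) <-> le x y.
Proof.
split=> [/(vleD2r x)|/(vleD2r (- x))]; first by rewrite add0r subrK.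
by rewrite subrr.
Qed.

Lemma vlerN2 x y : le (- x) (- y) <-> le y x.
Proof. by rewrite -vsubr_ge0 opprK addrC vsubr_ge0. Qed.

Lemma vaddr_ge0 x y : le 0 x -> le 0 y -> le 0 (x + y).
Proof. by move=> hx hy; rewrite -[0]addr0; apply: vleD. Qed.

Lemma vscaler_ge0 c x : 0 <= c -> le 0 x -> le 0 (c *: x).
Proof. by move=> hc /(vleZ2l hc); rewrite scaler0. Qed.

Lemma vleZ2r s t x : s <= t -> le 0 x -> le (s *: x) (t *: x).
Proof.
by move=> hst hx; apply/vsubr_ge0; rewrite -scalerBl; apply: vscaler_ge0; rewrite ?subr_ge0.
Qed.

Lemma vjoinC x y : join x y = join y x.
Proof. by apply: vle_anti; apply: vjoin_lub; (apply: vle_joinl || apply: vle_joinr). Qed.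

Lemma vmeetC x y : meet x y = meet y x.
Proof. by apply: vle_anti; apply: vmeet_glb; (apply: vle_meetl || apply: vle_meetr). Qed.

Lemma vaddr_joinr z x y : z + join x y = join (z + x) (z + y).
Proof.
apply: vle_anti; last by apply: vjoin_lub; apply: vleD2l; [apply: vle_joinl | apply: vle_joinr].
rewrite -[join (z + x) _](addNKr z); apply: vleD2l.
by apply: vjoin_lub; rewrite -[X in le X _](addKr z); apply: vleD2l;
  [apply: vle_joinl | apply: vle_joinr].
Qed.

Lemma voppr_join x y : - join x y = meet (- x) (- y).
Proof.
apply: vle_anti.
  by apply: vmeet_glb; apply/vlerN2; [apply: vle_joinl | apply: vle_joinr].
rewrite -[meet _ _]opprK; apply/vlerN2.
by apply: vjoin_lub; rewrite -[X in le X _]opprK; apply/vlerN2;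
  [apply: vle_meetl | apply: vle_meetr].
Qed.

Lemma voppr_meet x y : - meet x y = join (- x) (- y).
Proof. by rewrite -[x]opprK -[y]opprK -voppr_join !opprK. Qed.

Lemma vaddr_meetr z x y : z + meet x y = meet (z + x) (z + y).
Proof.
rewrite -[meet x y]opprK voppr_meet -[z]opprK -opprD vaddr_joinr voppr_join.
by rewrite !opprD !opprK.
Qed.

Lemma vaddr_join_meet x y : join x y + meet x y = x + y.
Proof.
have e : x + y - join y x = meet x y.
  by rewrite voppr_join vaddr_meetr addrK [x + y]addrC addrK.
by rewrite -e vjoinC addrC subrK.
Qed.

Lemma vjoin_ge0 x : le 0 x -> join x 0 = x.
Proof. by move=> hx; apply: vle_anti (vjoin_lub (vlexx x) hx) (vle_joinl x 0). Qed.

Lemma vscaler_meet c x y : 0 < c -> c *: meet x y = meet (c *: x) (c *: y).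
Proof.
move=> c_gt0; have c_neq0 : c != 0 by rewrite gt_eqF.
apply: vle_anti.
  by apply: vmeet_glb; apply: vleZ2l (ltW c_gt0) _; [apply: vle_meetl | apply: vle_meetr].
rewrite -[meet (c *: x) _](scalerKV c_neq0); apply: vleZ2l (ltW c_gt0) _.
have cV_ge0 : 0 <= c^-1 by rewrite invr_ge0 ltW.
apply: vmeet_glb.
  by rewrite -[x in le _ x](scalerK c_neq0); apply: vleZ2l cV_ge0 (vle_meetl _ _).
by rewrite -[y in le _ y](scalerK c_neq0); apply: vleZ2l cV_ge0 (vle_meetr _ _).
Qed.

Lemma vmeetS x y x' y' : le x x' -> le y y' -> le (meet x y) (meet x' y').
Proof.
by move=> hx hy; apply: vmeet_glb;
  [apply: vle_trans hx; apply: vle_meetl | apply: vle_trans hy; apply: vle_meetr].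
Qed.

Lemma vmeet_ge0 x y : le 0 x -> le 0 y -> le 0 (meet x y).
Proof. exact: vmeet_glb. Qed.

Lemma disjoint_le p q p' q' : le 0 p' -> le 0 q' -> le p' p -> le q' q ->
  meet p q = 0 -> meet p' q' = 0.
Proof.
move=> hp' hq' hp hq hpq; apply: vle_anti; last exact: vmeet_ge0.
by rewrite -hpq; apply: vmeetS.
Qed.

Lemma disjointZ p q s t : le 0 p -> le 0 q -> meet p q = 0 -> 0 <= s -> 0 <= t ->
  meet (s *: p) (t *: q) = 0.
Proof.
move=> hp hq hpq hs ht; have m_gt0 : 0 < s + t + 1 by lra.
apply: (@disjoint_le ((s + t + 1) *: p) ((s + t + 1) *: q)).
- exact: vscaler_ge0.
- exact: vscaler_ge0.
- by apply: vleZ2r => //; lra.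
- by apply: vleZ2r => //; lra.
- by rewrite -vscaler_meet // hpq scaler0.
Qed.

Lemma vjoin_disjoint p q : meet p q = 0 -> join p q = p + q.
Proof. by move=> hpq; rewrite -vaddr_join_meet hpq addr0. Qed.

Lemma vmeetDl_le p q x : le 0 p -> le 0 q -> le 0 x ->
  le (meet (p + q) x) (meet p x + meet q x).
Proof.
move=> hp hq hx.
have le_addr y : le 0 y -> le x (x + y).
  by move=> hy; rewrite -{1}[x]addr0; apply: vleD2l.
rewrite [meet p x + _]addrC vaddr_meetr ![meet q x + _]addrC !vaddr_meetr.
apply: vmeet_glb; apply: vmeet_glb.
- exact: vle_meetl.
- by apply: vle_trans (vle_meetr _ _) _; rewrite addrC; apply: le_addr.
- exact: vle_trans (vle_meetr _ _) (le_addr _ hq).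
- exact: vle_trans (vle_meetr _ _) (le_addr _ hx).
Qed.

Definition pos_part x := join x 0.
Definition neg_part x := join (- x) 0.

Lemma pos_part_ge0 x : le 0 (pos_part x). Proof. exact: vle_joinr. Qed.
Lemma neg_part_ge0 x : le 0 (neg_part x). Proof. exact: vle_joinr. Qed.

Lemma neg_partE x : neg_part x = pos_part x - x.
Proof. by rewrite [RHS]addrC vaddr_joinr addNr addr0 vjoinC. Qed.

Lemma pos_neg_partE x : pos_part x - neg_part x = x.
Proof. by rewrite neg_partE opprB addrC subrK. Qed.

Lemma disjoint_pos_neg_part x : meet (pos_part x) (neg_part x) = 0.
Proof.
have e : meet 0 (- x) = - pos_part x by rewrite voppr_join oppr0 vmeetC.
by rewrite neg_partE -[X in meet X _]addr0 -vaddr_meetr e subrr.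
Qed.

Definition gterm x y := join (join x y) 0 + meet (meet x y) 0.

Lemma gterm_disjoint x P Q : le 0 x -> meet P Q = 0 ->
  gterm (x - P) (x - Q) = x + x - join (P + Q) x.
Proof.
move=> hx hPQ.
rewrite /gterm -vaddr_joinr -voppr_meet hPQ subr0 vjoin_ge0 //.
rewrite -vaddr_meetr -voppr_join vjoin_disjoint // -addrA; congr (_ + _).
by rewrite voppr_join vaddr_meetr subrr.
Qed.

Lemma riesz_hom_ge0 h : riesz_hom join meet h -> positive_functional le h.
Proof.
case=> hh hjoin _ x hx.
by have := hjoin x 0; rewrite vjoin_ge0 // lfun0 // => ->; rewrite le_max lexx orbT.
Qed.

Lemma riesz_hom_gterm h x y : riesz_hom join meet h ->
  h (gterm x y) = Num.max (Num.max (h x) (h y)) 0 + Num.min (Num.min (h x) (h y)) 0.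
Proof. by case=> hh hjoin hmeet; rewrite lfunD // !hjoin !hmeet lfun0. Qed.

Lemma gspace_kernel_of_riesz_sum l f g : linear_functional l ->
  riesz_hom join meet f -> riesz_hom join meet g -> (forall x, l x = f x + g x) ->
  grothendieck_subspace join meet (kernel l).
Proof.
move=> hl hf hg hfg; split=> [|x y]; first exact: kernel_subspace.
rewrite /kernel -/(gterm x y) !hfg !(riesz_hom_gterm _ _ hf) !(riesz_hom_gterm _ _ hg).
move=> hx hy; have -> : g x = - f x by lra.
have -> : g y = - f y by lra.
by rewrite -[0 in X in _ + X = _]oppr0 -!oppr_min -!oppr_max; lra.
Qed.

Lemma riesz_hom_of_disjoint h : linear_functional h -> positive_functional le h ->
  (forall p q, le 0 p -> le 0 q -> meet p q = 0 -> h p = 0 \/ h q = 0) ->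
  riesz_hom join meet h.
Proof.
move=> hh hpos hdisj.
have h_pos_part w : h (pos_part w) = Num.max (h w) 0.
  have := congr1 h (pos_neg_partE w); rewrite (lfunB hh) => <-.
  have := hpos _ (neg_part_ge0 w); have := hpos _ (pos_part_ge0 w).
  case: (hdisj _ _ (pos_part_ge0 w) (neg_part_ge0 w) (disjoint_pos_neg_part w)) => -> ? ?;
    case: lerP; lra.
have hjoin x y : h (join x y) = Num.max (h x) (h y).
  have -> : join x y = x + pos_part (y - x).
    by rewrite vaddr_joinr addr0 [x + _]addrC subrK vjoinC.
  by rewrite (lfunD hh) h_pos_part (lfunB hh); case: lerP => ?; case: lerP => ?; lra.
split=> // x y; have := congr1 h (vaddr_join_meet x y).
by rewrite !(lfunD hh) hjoin; case: (lerP (h x) (h y)) => ?; lra.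
Qed.

Section PositiveConeExtension.
Variable F : X -> R.
Hypothesis FD : forall x y, le 0 x -> le 0 y -> F (x + y) = F x + F y.
Hypothesis FZ : forall c x, 0 <= c -> le 0 x -> F (c *: x) = c * F x.

Definition cone_ext x := F (pos_part x) - F (neg_part x).

Lemma cone_ext_subr p q : le 0 p -> le 0 q -> cone_ext (p - q) = F p - F q.
Proof.
move=> hp hq.
have e : neg_part (p - q) + p = pos_part (p - q) + q.
  by rewrite neg_partE opprB -addrA subrK.
have := FD (pos_part_ge0 (p - q)) hq; have := FD (neg_part_ge0 (p - q)) hp.
by rewrite e /cone_ext; lra.
Qed.

Lemma cone_extE p : le 0 p -> cone_ext p = F p.
Proof.
have := FZ (lexx 0) (vlexx 0); rewrite scale0r mul0r => F0.
by move=> hp; have := cone_ext_subr hp (vlexx 0); rewrite subr0 F0 subr0.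
Qed.

Lemma cone_extD x y : cone_ext (x + y) = cone_ext x + cone_ext y.
Proof.
have [px nx] := (pos_part_ge0 x, neg_part_ge0 x).
have [py ny] := (pos_part_ge0 y, neg_part_ge0 y).
rewrite -{1}(pos_neg_partE x) -{1}(pos_neg_partE y) addrACA -opprD.
rewrite (cone_ext_subr (vaddr_ge0 px py) (vaddr_ge0 nx ny)) (FD px py) (FD nx ny).
by rewrite /cone_ext; lra.
Qed.

Lemma cone_extZ c x : cone_ext (c *: x) = c * cone_ext x.
Proof.
have [px nx] := (pos_part_ge0 x, neg_part_ge0 x).
have [c_ge0|c_lt0] := lerP 0 c.
  rewrite -{1}(pos_neg_partE x) scalerBr.
  rewrite (cone_ext_subr (vscaler_ge0 c_ge0 px) (vscaler_ge0 c_ge0 nx)).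
  by rewrite (FZ c_ge0 px) (FZ c_ge0 nx) /cone_ext mulrBr.
have Nc_ge0 : 0 <= - c by lra.
have -> : c *: x = (- c) *: (neg_part x - pos_part x).
  by rewrite scaleNr -scalerN opprB pos_neg_partE.
rewrite scalerBr (cone_ext_subr (vscaler_ge0 Nc_ge0 nx) (vscaler_ge0 Nc_ge0 px)).
by rewrite (FZ Nc_ge0 px) (FZ Nc_ge0 nx) /cone_ext; ring.
Qed.

Lemma cone_ext_linear : linear_functional cone_ext.
Proof. by move=> c x y; rewrite cone_extD cone_extZ. Qed.

End PositiveConeExtension.

Section GrothendieckKernel.
Variable l : X -> R.
Hypotheses (hl : linear_functional l) (hpos : positive_functional le l).
Hypothesis hker : grothendieck_subspace join meet (kernel l).

Lemma l_mono x y : le x y -> l x <= l y.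
Proof. by move=> /vsubr_ge0 /hpos; rewrite (lfunB hl) subr_ge0. Qed.

Lemma l_normalize a : 0 < l a -> l ((l a)^-1 *: a) = 1.
Proof. by move=> la; rewrite (lfunZ hl) mulVf // gt_eqF. Qed.

Lemma l_meet_disjoint x P Q : le 0 x -> meet P Q = 0 -> l P = l x -> l Q = l x ->
  l (meet (P + Q) x) = l x.
Proof.
move=> hx hPQ hP hQ.
have xP_ker : l (x - P) = 0 by rewrite (lfunB hl) hP subrr.
have xQ_ker : l (x - Q) = 0 by rewrite (lfunB hl) hQ subrr.
have := hker.2 _ _ xP_ker xQ_ker; rewrite /kernel -/(gterm _ _) gterm_disjoint //.
have := congr1 l (vaddr_join_meet (P + Q) x).
by rewrite (lfunB hl) !(lfunD hl) hP hQ; lra.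
Qed.

Lemma no_disjoint_triple a b c : le 0 a -> le 0 b -> le 0 c ->
  meet a b = 0 -> meet a c = 0 -> meet b c = 0 -> 0 < l a -> 0 < l b -> 0 < l c -> False.
Proof.
move=> ha hb hc hab hac hbc la lb lc.
have inv_ge0 u : 0 < l u -> 0 <= (l u)^-1 by move=> ?; rewrite invr_ge0 ltW.
set a' := (l a)^-1 *: a; set b' := (l b)^-1 *: b; set c' := (l c)^-1 *: c.
have ha' : le 0 a' := vscaler_ge0 (inv_ge0 _ la) ha.
have hb' : le 0 b' := vscaler_ge0 (inv_ge0 _ lb) hb.
have hc' : le 0 c' := vscaler_ge0 (inv_ge0 _ lc) hc.
have hb'c' : meet b' c' = 0 := disjointZ hb hc hbc (inv_ge0 _ lb) (inv_ge0 _ lc).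
have hb'a' : meet b' a' = 0.
  by apply: disjointZ (inv_ge0 _ lb) (inv_ge0 _ la); rewrite // vmeetC.
have hc'a' : meet c' a' = 0.
  by apply: disjointZ (inv_ge0 _ lc) (inv_ge0 _ la); rewrite // vmeetC.
have hb'c'a' : meet (b' + c') a' = 0.
  apply: vle_anti; last exact: vmeet_ge0 (vaddr_ge0 hb' hc') ha'.
  by have := vmeetDl_le hb' hc' ha'; rewrite hb'a' hc'a' addr0.
have la' : l a' = 1 := l_normalize la.
have lb' : l b' = 1 := l_normalize lb.
have lc' : l c' = 1 := l_normalize lc.
have := l_meet_disjoint ha' hb'c'; rewrite hb'c'a' (lfun0 hl) la' lb' lc'.
by move=> /(_ erefl erefl) /eqP; rewrite eq_sym oner_eq0.
Qed.

Definition unit_disjoint a b := [/\ le 0 a, le 0 b, meet a b = 0, l a = 1 & l b = 1].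

Lemma unit_disjoint_sym a b : unit_disjoint a b -> unit_disjoint b a.
Proof. by case=> ha hb hab la lb; split; rewrite // vmeetC. Qed.

(* For [t >= l x] the value [l (meet x (t *: a))] no longer depends on [t]
   ([lpart_meet]): it is [l] of the component of [x] in the band of [a]. *)
Definition lpart a x := l (meet x (l x *: a)).

Lemma lpart_ge0 a x : le 0 a -> le 0 x -> 0 <= lpart a x.
Proof. by move=> ha hx; apply/hpos/vmeet_ge0/vscaler_ge0; rewrite ?hpos. Qed.

Lemma lpart_le a x : lpart a x <= l x.
Proof. exact/l_mono/vle_meetl. Qed.

Section UnitDisjointPair.
Variables a b : X.
Hypothesis hab : unit_disjoint a b.

Lemma l_meet_pair_le x t s : le 0 x -> 0 <= t -> 0 <= s ->
  l (meet x (t *: a)) + l (meet x (s *: b)) <= l x.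
Proof.
move=> hx ht hs; have [ha hb hab' _ _] := hab.
have hd : meet (meet x (t *: a)) (meet x (s *: b)) = 0.
  apply: (disjoint_le _ _ (vle_meetr _ _) (vle_meetr _ _) (disjointZ ha hb hab' ht hs)).
    exact: vmeet_ge0 hx (vscaler_ge0 ht ha).
  exact: vmeet_ge0 hx (vscaler_ge0 hs hb).
rewrite -(lfunD hl) -vjoin_disjoint //; apply: l_mono.
by apply: vjoin_lub; apply: vle_meetl.
Qed.

Lemma l_le_meet_pair x : le 0 x -> l x <= lpart a x + lpart b x.
Proof.
move=> hx; have [ha hb hab' la lb] := hab; have lx_ge0 := hpos hx.
have := l_meet_disjoint hx (disjointZ ha hb hab' lx_ge0 lx_ge0).
rewrite !(lfunZ hl) la lb mulr1 => /(_ erefl erefl) <-.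
rewrite /lpart -(lfunD hl) [meet x (_ *: a)]vmeetC [meet x (_ *: b)]vmeetC.
exact: l_mono (vmeetDl_le (vscaler_ge0 lx_ge0 ha) (vscaler_ge0 lx_ge0 hb) hx).
Qed.

Lemma lpart_sum x : le 0 x -> lpart a x + lpart b x = l x.
Proof.
move=> hx; have lx_ge0 := hpos hx.
by have := l_meet_pair_le hx lx_ge0 lx_ge0; have := l_le_meet_pair hx; rewrite /lpart; lra.
Qed.

Lemma lpart_meet x t : le 0 x -> l x <= t -> l (meet x (t *: a)) = lpart a x.
Proof.
move=> hx ht; have [ha _ _ _ _] := hab; have lx_ge0 := hpos hx.
have := l_meet_pair_le hx (le_trans lx_ge0 ht) lx_ge0; have := l_le_meet_pair hx.
have : lpart a x <= l (meet x (t *: a)) by exact/l_mono/vmeetS/(vleZ2r ht ha)/vlexx.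
by rewrite /lpart; lra.
Qed.

Lemma lpart_subadd x y : le 0 x -> le 0 y -> lpart a (x + y) <= lpart a x + lpart a y.
Proof.
move=> hx hy; have [ha _ _ _ _] := hab.
have t_ge0 : 0 <= l x + l y by rewrite addr_ge0 ?hpos.
have := l_mono (vmeetDl_le hx hy (vscaler_ge0 t_ge0 ha)).
rewrite (lfunD hl) (lpart_meet hx) ?lerDl ?hpos // (lpart_meet hy) ?lerDr ?hpos //.
by rewrite /lpart (lfunD hl x y).
Qed.

Lemma lpart_disjoint p q : le 0 p -> le 0 q -> meet p q = 0 ->
  lpart a p = 0 \/ lpart a q = 0.
Proof.
move=> hp hq hpq; have [ha hb hab' _ lb] := hab.
have [|p_neq0] := eqVneq (lpart a p) 0; first by left.
have [|q_neq0] := eqVneq (lpart a q) 0; first by right.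
have t_ge0 : 0 <= l p + l q by rewrite addr_ge0 ?hpos.
have hta := vscaler_ge0 t_ge0 ha.
have htab : meet ((l p + l q) *: a) b = 0.
  by rewrite -[b]scale1r disjointZ.
have [hp' hq'] := (vmeet_ge0 hp hta, vmeet_ge0 hq hta).
exfalso; apply: (no_disjoint_triple hp' hq' hb).
- exact: disjoint_le hp' hq' (vle_meetl _ _) (vle_meetl _ _) hpq.
- exact: disjoint_le hp' hb (vle_meetr _ _) (vlexx b) htab.
- exact: disjoint_le hq' hb (vle_meetr _ _) (vlexx b) htab.
- by rewrite lpart_meet ?lerDl ?hpos // lt_neqAle eq_sym p_neq0 lpart_ge0.
- by rewrite lpart_meet ?lerDr ?hpos // lt_neqAle eq_sym q_neq0 lpart_ge0.
- by rewrite lb ltr01.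
Qed.

End UnitDisjointPair.

Lemma lpart_add a b x y : unit_disjoint a b -> le 0 x -> le 0 y ->
  lpart a (x + y) = lpart a x + lpart a y.
Proof.
move=> hab hx hy; have hba := unit_disjoint_sym hab.
have := lpart_subadd hab hx hy; have := lpart_subadd hba hx hy.
have := lpart_sum hab hx; have := lpart_sum hab hy.
have := lpart_sum hab (vaddr_ge0 hx hy).
by rewrite (lfunD hl); lra.
Qed.

Lemma lpart_Z a c x : le 0 a -> 0 <= c -> le 0 x -> lpart a (c *: x) = c * lpart a x.
Proof.
move=> ha c_ge0 hx; have [->|c_neq0] := eqVneq c 0.
  have := lpart_le a 0; have := lpart_ge0 ha (vlexx 0).
  by rewrite scale0r mul0r (lfun0 hl); lra.
have c_gt0 : 0 < c by rewrite lt0r c_neq0.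
by rewrite /lpart (lfunZ hl) -scalerA -vscaler_meet // (lfunZ hl).
Qed.

Definition lcomp a := cone_ext (lpart a).

Lemma lcomp_riesz a b : unit_disjoint a b -> riesz_hom join meet (lcomp a).
Proof.
move=> hab; have [ha _ _ _ _] := hab.
have FD x y : le 0 x -> le 0 y -> lpart a (x + y) = lpart a x + lpart a y.
  exact: lpart_add hab.
have FZ c x : 0 <= c -> le 0 x -> lpart a (c *: x) = c * lpart a x.
  exact: lpart_Z.
apply: riesz_hom_of_disjoint (cone_ext_linear FD FZ) _ _.
  by move=> x hx; rewrite cone_extE //; apply: lpart_ge0.
by move=> p q hp hq hpq; rewrite !cone_extE //; apply: (lpart_disjoint hab).
Qed.

Lemma lcomp_sum a b x : unit_disjoint a b -> lcomp a x + lcomp b x = l x.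
Proof.
move=> hab; have := congr1 l (pos_neg_partE x); rewrite (lfunB hl) => <-.
rewrite -(lpart_sum hab (pos_part_ge0 x)) -(lpart_sum hab (neg_part_ge0 x)).
by rewrite /lcomp /cone_ext; lra.
Qed.

Lemma riesz_sum_of_gspace_kernel : exists f g : X -> R,
  riesz_hom join meet f /\ riesz_hom join meet g /\ forall x, l x = f x + g x.
Proof.
have [[a [b [ha hb hab la lb]]]|none] :=
  classic (exists a b, [/\ le 0 a, le 0 b, meet a b = 0, 0 < l a & 0 < l b]).
  have inv_ge0 u : 0 < l u -> 0 <= (l u)^-1 by move=> ?; rewrite invr_ge0 ltW.
  have hab1 : unit_disjoint ((l a)^-1 *: a) ((l b)^-1 *: b).
    split; rewrite ?l_normalize //.
    - exact: vscaler_ge0 (inv_ge0 _ la) ha.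
    - exact: vscaler_ge0 (inv_ge0 _ lb) hb.
    - exact: disjointZ ha hb hab (inv_ge0 _ la) (inv_ge0 _ lb).
  exists (lcomp ((l a)^-1 *: a)), (lcomp ((l b)^-1 *: b)).
  split; first exact: lcomp_riesz hab1.
  split; first exact: lcomp_riesz (unit_disjoint_sym hab1).
  by move=> x; rewrite (lcomp_sum x hab1).
exists l, (fun=> 0); split.
  apply: riesz_hom_of_disjoint => // p q hp hq hpq.
  have [|lp_neq0] := eqVneq (l p) 0; first by left.
  have [|lq_neq0] := eqVneq (l q) 0; first by right.
  by case: none; exists p, q; split; rewrite // lt_neqAle eq_sym ?lp_neq0 ?lq_neq0 hpos.
split; last by move=> x; rewrite addr0.
by split=> [c x y|x y|x y]; rewrite ?mulr0 ?addr0 ?maxxx ?minxx.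
Qed.

End GrothendieckKernel.
End VectorLattice.

Theorem lemma1 (R : realType) (X : lmodType R) (le : X -> X -> Prop)
  (join meet : X -> X -> X) (hX : is_vector_lattice le join meet)
  (l : X -> R) (hl : linear_functional l) :
  (exists f g : X -> R, riesz_hom join meet f /\ riesz_hom join meet g /\
     forall x, l x = f x + g x) <->
  (positive_functional le l /\ grothendieck_subspace join meet (kernel l)).
Proof.
split=> [[f [g [hf [hg hfg]]]] | [hpos hker]].
  split; last exact: gspace_kernel_of_riesz_sum hl hf hg hfg.
  by move=> x hx; rewrite hfg addr_ge0 // (riesz_hom_ge0 hX).
exact: (riesz_sum_of_gspace_kernel hX hl hpos hker).
Qed.
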